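(* Let $\mathcal{H}$ be a hedgehog with support function $h(s)=a_0+\sum_{n\geqslant1}(a_n\cos(ns)+b_n\sin(ns))$ and average width $\overline{w}$, and let $k>2$ be an integer. Then the $k$th Order Preserving Set $\mathcal{P}_k$ of $\mathcal{H}$ is a hedgehog with support function \[ h_k(s)=\frac1k\sum_{j=0}^{k-1}h\Big(s+\frac{2\pi j}{k}\Big)-\frac12\overline{w}, \] i.e. $\mathcal{P}_k(s)=h_k(s)u(s)+h_k'(s)u'(s)$ for all $s$, and \[ h_k(s)=\sum_{k\mid n,\ n>1}\big(a_n\cos(ns)+b_n\sin(ns)\big). \]
   Context: Write $u(s)=(\cos s,\sin s)$ and $u'(s)=(-\sin s,\cos s)$. A hedgehog is a closed planar curve determined by a smooth $2\pi$-periodic function $h$ (its support function; equivalently, the difference of support functions of two convex bodies) via $\mathcal{H}(s)=h(s)u(s)+h'(s)u'(s)$, $s\in[0,2\pi]$. Its average width is $\overline{w}=\frac1\pi\int_0^{2\pi}h(s)\,ds$. For $(x,y)\in\mathbb{R}^2$ let $(x,y)^\perp=(-y,x)$ and set $\mathcal{H}^\perp(s)=\mathcal{H}(s)^\perp$. The $k$th Order Preserving Set of $\mathcal{H}$ is the curve $\mathcal{P}_k(s)=\frac{1}{k}\sum_{j=1}^{k}\Big(\cos\big(\tfrac{2\pi j}{k}\big)\,\mathcal{H}\big(s+\tfrac{2\pi j}{k}\big)-\sin\big(\tfrac{2\pi j}{k}\big)\,\mathcal{H}^{\perp}\big(s+\tfrac{2\pi j}{k}\big)\Big)-\frac{1}{2}\overline{w}\,u(s)$,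 $s\in[0,2\pi]$. (The points $\mathcal{H}(s+2\pi j/k)$, $j=1,\dots,k$, form an isogonal family: their normals are spaced by angles $2\pi/k$.) *)

From Stdlib Require Import Reals Lra.
From Coquelicot Require Import Coquelicot.
Open Scope R_scope.

Definition vec := (R * R)%type.
Definition vadd (p q : vec) : vec := (fst p + fst q, snd p + snd q).
Definition vscal (c : R) (p : vec) : vec := (c * fst p, c * snd p).
Definition perp (p : vec) : vec := (- snd p, fst p).

Definition u (s : R) : vec := (cos s, sin s).
Definition u' (s : R) : vec := (- sin s, cos s).

Definition smooth (h : R -> R) : Prop := forall (n : nat) (x : R), ex_derive_n h n x.
Definition periodic2pi (h : R -> R) : Prop := forall s, h (s + 2 * PI) = h s.

Definition hedgehog (h : R -> R) (s : R) : vec :=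
  vadd (vscal (h s) (u s)) (vscal (Derive h s) (u' s)).

Definition hedgehog_perp (h : R -> R) (s : R) : vec := perp (hedgehog h s).

Definition avg_width (h : R -> R) : R := / PI * RInt h 0 (2 * PI).

(* vsum f n = f 1 + ... + f n *)
Fixpoint vsum (f : nat -> vec) (n : nat) : vec :=
  match n with
  | O => (0, 0)
  | S m => vadd (vsum f m) (f (S m))
  end.

Definition OPS (h : R -> R) (k : nat) (s : R) : vec :=
  vadd
    (vscal (/ INR k)
       (vsum (fun j =>
          let t := 2 * PI * INR j / INR k in
          vadd (vscal (cos t) (hedgehog h (s + t)))
               (vscal (- sin t) (hedgehog_perp h (s + t)))) k))
    (vscal (- (/ 2 * avg_width h)) (u s)).

Definition hk (h : R -> R) (k : nat) (s : R) : R :=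
  / INR k * sum_n_m (fun j => h (s + 2 * PI * INR j / INR k)) 0 (k - 1)
  - / 2 * avg_width h.

Definition fourier_a0 (h : R -> R) : R := / (2 * PI) * RInt h 0 (2 * PI).
Definition fourier_a (h : R -> R) (n : nat) : R :=
  / PI * RInt (fun s => h s * cos (INR n * s)) 0 (2 * PI).
Definition fourier_b (h : R -> R) (n : nat) : R :=
  / PI * RInt (fun s => h s * sin (INR n * s)) 0 (2 * PI).

Definition fourier_term_div (h : R -> R) (k : nat) (s : R) (n : nat) : R :=
  if (Nat.ltb 1 n && Nat.eqb (n mod k) 0)%bool
  then fourier_a h n * cos (INR n * s) + fourier_b h n * sin (INR n * s)
  else 0.

From Stdlib Require Import Reals Lra Lia.
From Coquelicot Require Import Coquelicot.
Open Scope R_scope.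

(* Averaging over the rotations s -> s + 2 pi j / k (j = 0, ..., k-1) keeps the
   Fourier mode of order n when k divides n and kills it otherwise, since
   sum_j exp(2 pi i n j / k) is k or 0; subtracting w/2 = a_0 removes the constant
   term.  Turning H(s+t) back by the angle t gives h(s+t) u(s) + h'(s+t) u'(s), so
   the Order Preserving Set is the hedgehog of the average h_k.
   The Fourier series converges at every point to a C^2 periodic function h: with
   Q_N(t) = pi t - t^2/2 + sum_{n<=N} 2 cos(n t)/n^2, integrating by parts gives
   h(x) - S_N h(x) = 1/(2 pi) int_0^{2 pi} h''(x+t) (Q_N(t) - Q_N(pi)) dt, and
   Q_N(t) - Q_N(pi) = - int_t^pi (s - t) D_N(s) ds, D_N the Dirichlet kernel, is at
   most pi/(N + 1/2) after one more integration by parts against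
   D_N(s) = sin((N + 1/2) s) / sin(s/2). *)

(* Coquelicot states these for an abstract monoid or normed module; the
   instances at R expose [Rplus] and [Rmult] to [rewrite], [ring] and [field]. *)

Lemma sum_n_m_R_S (a : nat -> R) n m : (n <= S m)%nat ->
  sum_n_m a n (S m) = sum_n_m a n m + a (S m).
Proof. exact (sum_n_Sm a n m). Qed.

Lemma sum_n_R_S (a : nat -> R) N : sum_n a (S N) = sum_n a N + a (S N).
Proof. exact (sum_Sn a N). Qed.

Lemma sum_n_m_ext_loc_R (a b : nat -> R) n m :
  (forall k, (n <= k <= m)%nat -> a k = b k) -> sum_n_m a n m = sum_n_m b n m.
Proof. exact (sum_n_m_ext_loc a b n m). Qed.

Lemma sum_n_m_Rplus (a b : nat -> R) p q :
  sum_n_m (fun n => a n + b n) p q = sum_n_m a p q + sum_n_m b p q.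
Proof. exact (sum_n_m_plus a b p q). Qed.

Lemma sum_n_m_Rmult_l (c : R) (a : nat -> R) p q :
  sum_n_m (fun n => c * a n) p q = c * sum_n_m a p q.
Proof. exact (sum_n_m_mult_l c a p q). Qed.

Lemma sum_n_m_shift_periodic (a : nat -> R) m : a (S m) = a O ->
  sum_n_m a 1 (S m) = sum_n_m a 0 m.
Proof.
  intros Hwrap.
  rewrite sum_n_m_R_S, Hwrap, (sum_Sn_m a 0 m) by lia.
  apply Rplus_comm.
Qed.

Lemma is_derive_Rplus (f g : R -> R) x a b :
  is_derive f x a -> is_derive g x b -> is_derive (fun y => f y + g y) x (a + b).
Proof. exact (@is_derive_plus R_AbsRing R_NormedModule f g x a b). Qed.

Lemma is_derive_sum_n_m (f df : nat -> R -> R) a b x :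
  (forall n y, (a <= n <= b)%nat -> is_derive (f n) y (df n y)) ->
  is_derive (fun y => sum_n_m (fun n => f n y) a b) x (sum_n_m (fun n => df n x) a b).
Proof.
  intros Hf.
  rewrite (sum_n_m_ext_loc _ (fun n => Derive_n (f n) 1 x)).
  - apply (is_derive_n_sum_n_m a b f 1 x), filter_forall; intros y n [| [| j]] Hn Hj;
      [exact I | eexists; apply Hf, Hn | lia].
  - intros n Hn; symmetry; apply is_derive_unique, Hf, Hn.
Qed.

Lemma continuous_Rplus (f g : R -> R) x :
  continuous f x -> continuous g x -> continuous (fun t => f t + g t) x.
Proof. apply (@continuous_plus R_UniformSpace R_AbsRing R_NormedModule). Qed.

Lemma continuous_Rmult (f g : R -> R) x :
  continuous f x -> continuous g x -> continuous (fun t => f t * g t) x.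
Proof. apply (@continuous_mult R_UniformSpace R_AbsRing). Qed.

Lemma continuous_Rminus (f g : R -> R) x :
  continuous f x -> continuous g x -> continuous (fun t => f t - g t) x.
Proof.
  intros Hf Hg; apply continuous_Rplus; [exact Hf |].
  apply (@continuous_opp R_UniformSpace R_AbsRing R_NormedModule), Hg.
Qed.

Lemma continuous_shift (f : R -> R) x t :
  continuous f (x + t) -> continuous (fun t => f (x + t)) t.
Proof.
  intros Hf; apply (continuous_comp (fun t => x + t) f); [| exact Hf].
  apply (@ex_derive_continuous R_AbsRing R_NormedModule); auto_derive; exact I.
Qed.

(* Matching is syntactic on purpose: [apply continuous_Rplus] would unfold
   definitions such as [dirichlet_kernel] to find a sum and may loop. *)
Ltac prove_continuous :=
  match goal with
  | |- continuous (fun t => @?f t + @?g t) _ =>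
      apply (continuous_Rplus f g); prove_continuous
  | |- continuous (fun t => @?f t - @?g t) _ =>
      apply (continuous_Rminus f g); prove_continuous
  | |- continuous (fun t => @?f t * @?g t) _ =>
      apply (continuous_Rmult f g); prove_continuous
  | |- continuous (fun t => Rabs (@?f t)) _ =>
      apply (continuous_Rabs_comp f); prove_continuous
  | |- continuous (fun t => ?f (?x + t)) _ =>
      apply (continuous_shift f x); solve [auto]
  | |- _ =>
      solve [apply (@ex_derive_continuous R_AbsRing R_NormedModule);
             auto_derive; repeat split; auto]
  end.

Lemma ex_RInt_continuous_R (f : R -> R) a b :
  (forall t, Rmin a b <= t <= Rmax a b -> continuous f t) -> ex_RInt f a b.
Proof. exact (@ex_RInt_continuous R_CompleteNormedModule f a b). Qed.

Ltac prove_ex_RInt := apply ex_RInt_continuous_R; intros; prove_continuous.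

Lemma RInt_ext_R (f g : R -> R) a b :
  (forall x, Rmin a b < x < Rmax a b -> f x = g x) -> RInt f a b = RInt g a b.
Proof. exact (RInt_ext f g a b). Qed.

Lemma RInt_Rplus (f g : R -> R) a b : ex_RInt f a b -> ex_RInt g a b ->
  RInt (fun t => f t + g t) a b = RInt f a b + RInt g a b.
Proof. exact (RInt_plus f g a b). Qed.

Lemma RInt_Rminus (f g : R -> R) a b : ex_RInt f a b -> ex_RInt g a b ->
  RInt (fun t => f t - g t) a b = RInt f a b - RInt g a b.
Proof. exact (RInt_minus f g a b). Qed.

Lemma RInt_Rmult_l (f : R -> R) c a b : ex_RInt f a b ->
  RInt (fun t => c * f t) a b = c * RInt f a b.
Proof. exact (RInt_scal f a b c). Qed.

Lemma RInt_antiderivative (F f : R -> R) a b :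
  (forall x, Rmin a b <= x <= Rmax a b -> is_derive F x (f x)) ->
  (forall x, Rmin a b <= x <= Rmax a b -> continuous f x) ->
  RInt f a b = F b - F a.
Proof.
  intros HF Hf; apply (@is_RInt_unique R_CompleteNormedModule).
  exact (@is_RInt_derive R_CompleteNormedModule F f a b HF Hf).
Qed.

Lemma periodic2pi_Derive f : periodic2pi f -> periodic2pi (Derive f).
Proof.
  intros Hper s.
  transitivity (Derive (fun y => f (y + 2 * PI)) s).
  - symmetry; exact (Derive_n_comp_trans f 1 s (2 * PI)).
  - apply Derive_ext, Hper.
Qed.

Lemma RInt_periodic_shift (g : R -> R) x :
  (forall y, continuous g y) -> periodic2pi g ->
  RInt (fun t => g (x + t)) 0 (2 * PI) = RInt g 0 (2 * PI).
Proof.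
  intros Hg Hper.
  assert (Hint : forall a b, ex_RInt g a b) by (intros; apply ex_RInt_continuous_R; auto).
  assert (Htranslate : forall c a b,
            RInt (fun t => g (t + c)) a b = RInt g (a + c) (b + c)).
  { intros c a b.
    pose proof (RInt_comp_lin g 1 c a b (Hint _ _)) as Hlin.
    rewrite !Rmult_1_l in Hlin; rewrite <- Hlin.
    apply RInt_ext; intros y _; unfold scal; simpl; unfold mult; simpl.
    rewrite !Rmult_1_l; reflexivity. }
  assert (Hleft : RInt (fun t => g (x + t)) 0 (2 * PI) = RInt g x (x + 2 * PI)).
  { rewrite (RInt_ext _ (fun t => g (t + x))) by (intros; f_equal; ring).
    rewrite Htranslate; f_equal; ring. }
  assert (Hwrap : RInt g (2 * PI) (x + 2 * PI) = RInt g 0 x).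
  { rewrite <- (RInt_ext (fun t => g (t + 2 * PI)) g 0 x) by (intros; apply Hper).
    rewrite Htranslate; f_equal; ring. }
  rewrite Hleft, <- (RInt_Chasles g x 0 (x + 2 * PI)),
    <- (RInt_Chasles g 0 (2 * PI) (x + 2 * PI)), Hwrap, <- (opp_RInt_swap g 0 x) by auto.
  unfold plus, opp; simpl; ring.
Qed.

(** * The Dirichlet kernel and the error kernel *)

Definition dirichlet_kernel (N : nat) (s : R) : R :=
  1 + sum_n_m (fun n => 2 * cos (INR n * s)) 1 N.

Definition fourier_error_kernel (N : nat) (t : R) : R :=
  PI * t - t * t / 2 + sum_n_m (fun n => 2 * cos (INR n * t) / (INR n * INR n)) 1 N.

(* With D_N(s) = sin((N + 1/2) s) / sin(s/2), the integrand (s - t) D_N(s) is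
   [dirichlet_weight t s * sin ((N + 1/2) s)]. *)
Definition dirichlet_weight (t s : R) : R := (s - t) / sin (s / 2).

Definition dirichlet_weight' (t s : R) : R :=
  (sin (s / 2) - (s - t) * cos (s / 2) / 2) / (sin (s / 2) * sin (s / 2)).

Lemma sin_INR_mult_PI n : sin (INR n * PI) = 0.
Proof. apply sin_eq_0_1; exists (Z.of_nat n); rewrite <- INR_IZR_INZ; reflexivity. Qed.

Lemma cos_INR_plus_half_mult_PI N : cos ((INR N + / 2) * PI) = 0.
Proof.
  replace ((INR N + / 2) * PI) with (INR N * PI + PI / 2) by field.
  rewrite cos_plus, cos_PI2, sin_PI2, sin_INR_mult_PI; ring.
Qed.

Lemma sin_half_pos s : 0 < s <= PI -> 0 < sin (s / 2).
Proof. intros Hs; pose proof PI_RGT_0; apply sin_gt_0; lra. Qed.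

Lemma dirichlet_kernel_mul_sin_half N s :
  dirichlet_kernel N s * sin (s / 2) = sin ((INR N + / 2) * s).
Proof.
  unfold dirichlet_kernel; induction N as [| N IH].
  - rewrite sum_n_m_zero by lia; unfold zero; simpl.
    rewrite Rplus_0_r, Rmult_1_l, Rplus_0_l; f_equal; field.
  - rewrite sum_n_m_R_S, <- Rplus_assoc, Rmult_plus_distr_r, IH, S_INR by lia.
    replace ((INR N + / 2) * s) with ((INR N + 1) * s - s / 2) by field.
    replace ((INR N + 1 + / 2) * s) with ((INR N + 1) * s + s / 2) by field.
    rewrite sin_plus, sin_minus; ring.
Qed.

Lemma ex_derive_dirichlet_kernel N : forall s, ex_derive (dirichlet_kernel N) s.
Proof.
  intros s; unfold dirichlet_kernel.
  apply (ex_derive_plus (fun _ => 1)); [apply ex_derive_const |].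
  eexists; apply (is_derive_sum_n_m _ (fun n y => - (2 * (INR n * sin (INR n * y))))).
  intros n y _; auto_derive; [exact I | ring].
Qed.

Lemma ex_derive_fourier_error_kernel N : forall t, ex_derive (fourier_error_kernel N) t.
Proof.
  intros t; unfold fourier_error_kernel.
  apply (ex_derive_plus (fun t => PI * t - t * t / 2)); [auto_derive; exact I |].
  eexists; apply (is_derive_sum_n_m _
    (fun n y => 2 * (- (INR n * sin (INR n * y))) / (INR n * INR n))).
  intros n y Hn; auto_derive; [exact I | field; apply not_0_INR; lia].
Qed.

Lemma fourier_error_kernel_0 t : fourier_error_kernel 0 t = PI * t - t * t / 2.
Proof. unfold fourier_error_kernel; rewrite sum_n_m_zero by lia; apply Rplus_0_r. Qed.

Lemma fourier_error_kernel_S N t :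
  fourier_error_kernel (S N) t =
  fourier_error_kernel N t + 2 * cos (INR (S N) * t) / (INR (S N) * INR (S N)).
Proof. unfold fourier_error_kernel; rewrite sum_n_m_R_S by lia; ring. Qed.

Lemma fourier_error_kernel_reflect N t :
  fourier_error_kernel N (2 * PI - t) = fourier_error_kernel N t.
Proof.
  unfold fourier_error_kernel; f_equal; [field |].
  apply sum_n_m_ext; intros n.
  replace (INR n * (2 * PI - t)) with (- (INR n * t) + 2 * INR n * PI) by ring.
  rewrite cos_period, cos_neg; reflexivity.
Qed.

Lemma fourier_error_kernel_sub_PI N t :
  fourier_error_kernel N t - fourier_error_kernel N PI =
  - RInt (fun s => (s - t) * dirichlet_kernel N s) t PI.
Proof.
  pose proof (ex_derive_dirichlet_kernel N) as HD.
  set (F := fun n s =>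
    2 * ((s - t) * sin (INR n * s) / INR n + cos (INR n * s) / (INR n * INR n))).
  rewrite (RInt_antiderivative (fun s => (s - t) * (s - t) / 2 + sum_n_m (fun n => F n s) 1 N)).
  - assert (HFPI : sum_n_m (fun n => F n PI) 1 N =
                   sum_n_m (fun n => 2 * cos (INR n * PI) / (INR n * INR n)) 1 N).
    { apply sum_n_m_ext_loc_R; intros n Hn; unfold F.
      rewrite sin_INR_mult_PI; field; apply not_0_INR; lia. }
    assert (HFt : sum_n_m (fun n => F n t) 1 N =
                  sum_n_m (fun n => 2 * cos (INR n * t) / (INR n * INR n)) 1 N).
    { apply sum_n_m_ext_loc_R; intros n Hn; unfold F.
      rewrite Rminus_diag; field; apply not_0_INR; lia. }
    rewrite HFPI, HFt; unfold fourier_error_kernel; field.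
  - intros s _.
    replace ((s - t) * dirichlet_kernel N s)
      with ((s - t) + sum_n_m (fun n => (s - t) * (2 * cos (INR n * s))) 1 N)
      by (unfold dirichlet_kernel; rewrite sum_n_m_Rmult_l; ring).
    apply is_derive_Rplus; [auto_derive; [exact I | field] |].
    apply (is_derive_sum_n_m _ (fun n s => (s - t) * (2 * cos (INR n * s)))).
    intros n y Hn; unfold F; auto_derive; [exact I |].
    field; apply not_0_INR; lia.
  - intros s _; prove_continuous.
Qed.

Lemma is_derive_dirichlet_weight t s :
  sin (s / 2) <> 0 -> is_derive (dirichlet_weight t) s (dirichlet_weight' t s).
Proof.
  intros Hs; unfold dirichlet_weight, dirichlet_weight'; auto_derive; [exact Hs |].
  change (s * / 2) with (s / 2); field; exact Hs.
Qed.

Lemma continuous_dirichlet_weight' t s :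
  sin (s / 2) <> 0 -> continuous (dirichlet_weight' t) s.
Proof.
  intros Hs; apply (@ex_derive_continuous R_AbsRing R_NormedModule).
  unfold dirichlet_weight'; auto_derive; change (s * / 2) with (s / 2).
  apply Rmult_integral_contrapositive; split; exact Hs.
Qed.

Lemma RInt_dirichlet_by_parts N t : 0 < t <= PI ->
  RInt (fun s => (s - t) * dirichlet_kernel N s) t PI =
  / (INR N + / 2) * RInt (fun s => cos ((INR N + / 2) * s) * dirichlet_weight' t s) t PI.
Proof.
  intros Ht.
  set (w := INR N + / 2).
  assert (Hw : 0 < w) by (unfold w; pose proof (pos_INR N); lra).
  pose proof (ex_derive_dirichlet_kernel N) as HD.
  assert (Hsin : forall s, Rmin t PI <= s <= Rmax t PI -> sin (s / 2) <> 0).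
  { intros s Hs; rewrite Rmin_left, Rmax_right in Hs by lra.
    apply Rgt_not_eq, sin_half_pos; lra. }
  assert (Hcont : forall s, Rmin t PI <= s <= Rmax t PI ->
                  continuous (fun s => cos (w * s) * dirichlet_weight' t s) s).
  { intros s Hs; apply continuous_Rmult; [prove_continuous |].
    apply continuous_dirichlet_weight', Hsin, Hs. }
  assert (Hparts :
    RInt (fun s => (s - t) * dirichlet_kernel N s
                   - / w * (cos (w * s) * dirichlet_weight' t s)) t PI =
    - dirichlet_weight t PI * cos (w * PI) / w - - dirichlet_weight t t * cos (w * t) / w).
  { apply (RInt_antiderivative (fun s => - dirichlet_weight t s * cos (w * s) / w)).
    - intros s Hs.
      assert (Hds : dirichlet_kernel N s = sin (w * s) / sin (s / 2)).
      { unfold w; rewrite <- (dirichlet_kernel_mul_sin_half N s); field; apply Hsin, Hs. }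
      pose proof (is_derive_dirichlet_weight t s (Hsin s Hs)) as Hweight.
      auto_derive; [exists (dirichlet_weight' t s); exact Hweight |].
      change (Derive (fun x => dirichlet_weight t x) s) with (Derive (dirichlet_weight t) s).
      rewrite (is_derive_unique _ _ _ Hweight), Hds; unfold dirichlet_weight.
      field; split; [lra | apply Hsin, Hs].
    - intros s Hs; apply continuous_Rminus; [prove_continuous |].
      apply (continuous_Rmult (fun _ => / w)); [prove_continuous | apply Hcont, Hs]. }
  unfold dirichlet_weight, w in Hparts.
  rewrite Rminus_diag, cos_INR_plus_half_mult_PI in Hparts; fold w in Hparts.
  rewrite RInt_Rminus, RInt_Rmult_l in Hparts.
  - unfold Rdiv in Hparts; lra.
  - apply ex_RInt_continuous_R, Hcont.
  - prove_ex_RInt.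
  - apply (@ex_RInt_scal R_NormedModule), ex_RInt_continuous_R, Hcont.
Qed.

Lemma mult_cos_le_sin y : 0 <= y <= PI / 2 -> y * cos y <= sin y.
Proof.
  intros Hy.
  assert (Hint : RInt (fun z => z * sin z) 0 y = sin y - y * cos y - (sin 0 - 0 * cos 0)).
  { apply (RInt_antiderivative (fun z => sin z - z * cos z)).
    - intros z _; auto_derive; [exact I | ring].
    - intros z _; prove_continuous. }
  assert (0 <= RInt (fun z => z * sin z) 0 y).
  { apply RInt_ge_0; [lra | prove_ex_RInt |].
    intros z Hz; apply Rmult_le_pos; [lra |].
    apply sin_ge_0; pose proof PI_RGT_0; lra. }
  rewrite sin_0 in Hint; lra.
Qed.

Lemma dirichlet_weight'_nonneg t s : 0 < t -> t <= s <= PI -> 0 <= dirichlet_weight' t s.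
Proof.
  intros Ht Hs; pose proof PI_RGT_0.
  assert (Hsin : 0 < sin (s / 2)) by (apply sin_half_pos; lra).
  assert (Hcos : 0 <= cos (s / 2)) by (apply cos_ge_0; lra).
  assert (Hx : s / 2 * cos (s / 2) <= sin (s / 2)) by (apply mult_cos_le_sin; lra).
  assert ((s - t) * cos (s / 2) / 2 <= s / 2 * cos (s / 2))
    by (unfold Rdiv; rewrite Rmult_assoc, (Rmult_comm (cos _)), <- Rmult_assoc;
        apply Rmult_le_compat_r; lra).
  unfold dirichlet_weight'; apply Rdiv_le_0_compat; nra.
Qed.

Lemma abs_RInt_cos_mul_dirichlet_weight'_le w t : 0 < t <= PI ->
  Rabs (RInt (fun s => cos (w * s) * dirichlet_weight' t s) t PI) <= PI.
Proof.
  intros Ht; pose proof PI_RGT_0.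
  assert (Hsin : forall s, Rmin t PI <= s <= Rmax t PI -> sin (s / 2) <> 0).
  { intros s Hs; rewrite Rmin_left, Rmax_right in Hs by lra.
    apply Rgt_not_eq, sin_half_pos; lra. }
  assert (Hweight : forall s, Rmin t PI <= s <= Rmax t PI ->
                    continuous (dirichlet_weight' t) s)
    by (intros s Hs; apply continuous_dirichlet_weight', Hsin, Hs).
  assert (Hcont : forall s, Rmin t PI <= s <= Rmax t PI ->
                  continuous (fun s => cos (w * s) * dirichlet_weight' t s) s)
    by (intros s Hs; apply continuous_Rmult; [prove_continuous | apply Hweight, Hs]).
  apply (Rle_trans _ (RInt (dirichlet_weight' t) t PI)).
  - eapply Rle_trans; [apply abs_RInt_le; [lra | apply ex_RInt_continuous_R, Hcont] |].
    apply RInt_le; [lra | | apply ex_RInt_continuous_R, Hweight |].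
    + apply ex_RInt_continuous_R; intros s Hs.
      apply continuous_Rabs_comp, Hcont, Hs.
    + intros s Hs; rewrite Rabs_mult, (Rabs_pos_eq (dirichlet_weight' t s))
        by (apply dirichlet_weight'_nonneg; lra).
      rewrite <- (Rmult_1_l (dirichlet_weight' t s)) at 2.
      apply Rmult_le_compat_r;
        [apply dirichlet_weight'_nonneg; lra | apply Rabs_le, COS_bound].
  - rewrite (RInt_antiderivative (dirichlet_weight t)).
    + unfold dirichlet_weight; rewrite Rminus_diag, sin_PI2; unfold Rdiv; lra.
    + intros s Hs; apply is_derive_dirichlet_weight, Hsin, Hs.
    + exact Hweight.
Qed.

Lemma fourier_error_kernel_bound N t : 0 < t < 2 * PI ->
  Rabs (fourier_error_kernel N t - fourier_error_kernel N PI) <= PI / (INR N + / 2).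
Proof.
  assert (Hhalf : forall t, 0 < t <= PI ->
            Rabs (fourier_error_kernel N t - fourier_error_kernel N PI)
            <= PI / (INR N + / 2)).
  { intros s Hs.
    assert (Hw : 0 < / (INR N + / 2))
      by (apply Rinv_0_lt_compat; pose proof (pos_INR N); lra).
    rewrite fourier_error_kernel_sub_PI, RInt_dirichlet_by_parts by exact Hs.
    rewrite Rabs_Ropp, Rabs_mult, (Rabs_pos_eq _ (Rlt_le _ _ Hw)), Rmult_comm.
    apply Rmult_le_compat_r; [lra | apply abs_RInt_cos_mul_dirichlet_weight'_le, Hs]. }
  intros Ht; destruct (Rle_dec t PI) as [Hle | Hgt].
  - apply Hhalf; lra.
  - rewrite <- fourier_error_kernel_reflect; apply Hhalf; lra.
Qed.

Lemma is_lim_seq_inv_INR_plus_half : is_lim_seq (fun N => / (INR N + / 2)) 0.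
Proof.
  apply (is_lim_seq_inv _ p_infty); [| discriminate].
  apply (is_lim_seq_plus _ _ p_infty (/ 2) p_infty);
    [apply is_lim_seq_INR | apply is_lim_seq_const | reflexivity].
Qed.

(** * Pointwise convergence of the Fourier series of a C^2 periodic function *)

Definition fourier_mode (h : R -> R) (n : nat) (x : R) : R :=
  fourier_a h n * cos (INR n * x) + fourier_b h n * sin (INR n * x).

Definition fourier_term (h : R -> R) (x : R) (n : nat) : R :=
  if Nat.eqb n 0 then fourier_a0 h else fourier_mode h n x.

Section FourierSeries.

Variable h : R -> R.
Local Notation h'' := (Derive (Derive h)).
Hypothesis h_derivable : forall x, ex_derive h x.
Hypothesis h'_derivable : forall x, ex_derive (Derive h) x.
Hypothesis h''_continuous : forall x, continuous h'' x.
Hypothesis h_periodic : periodic2pi h.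

Lemma fourier_mode_shift x n :
  fourier_mode h n x = / PI * RInt (fun t => h (x + t) * cos (INR n * t)) 0 (2 * PI).
Proof.
  set (g := fun y => h y * cos (INR n * (y - x))).
  unfold fourier_mode, fourier_a, fourier_b.
  rewrite (RInt_ext_R (fun t => h (x + t) * cos (INR n * t)) (fun t => g (x + t)))
    by (intros t _; unfold g; replace (x + t - x) with t by ring; reflexivity).
  rewrite RInt_periodic_shift.
  - rewrite (RInt_ext_R g (fun y => cos (INR n * x) * (h y * cos (INR n * y))
                                   + sin (INR n * x) * (h y * sin (INR n * y))))
      by (intros y _; unfold g; rewrite Rmult_minus_distr_l, cos_minus; ring).
    rewrite RInt_Rplus, !RInt_Rmult_l; try prove_ex_RInt.
    ring.
  - intros y; unfold g; prove_continuous.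
  - intros y; unfold g; rewrite h_periodic.
    replace (INR n * (y + 2 * PI - x)) with (INR n * (y - x) + 2 * INR n * PI) by ring.
    rewrite cos_period; reflexivity.
Qed.

Lemma RInt_second_derivative_cos x n :
  RInt (fun t => h'' (x + t) * cos (INR n * t)) 0 (2 * PI) =
  - (INR n * INR n) * RInt (fun t => h (x + t) * cos (INR n * t)) 0 (2 * PI).
Proof.
  set (F := fun t => Derive h (x + t) * cos (INR n * t) + INR n * h (x + t) * sin (INR n * t)).
  assert (Hparts :
    RInt (fun t => h'' (x + t) * cos (INR n * t)
                   + INR n * INR n * (h (x + t) * cos (INR n * t))) 0 (2 * PI) =
    F (2 * PI) - F 0).
  { apply RInt_antiderivative.
    - intros t _; unfold F; auto_derive; [repeat split; auto |].
      change (Derive (fun y => Derive h y)) with h''.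
      change (Derive (fun y => h y)) with (Derive h); ring.
    - intros t _; prove_continuous. }
  assert (HF : F (2 * PI) = F 0).
  { unfold F; replace (INR n * (2 * PI)) with (0 + 2 * INR n * PI) by ring.
    rewrite (periodic2pi_Derive h h_periodic), h_periodic, cos_period, sin_period,
      Rplus_0_r, Rmult_0_r; reflexivity. }
  rewrite HF, Rminus_diag, RInt_Rplus, RInt_Rmult_l in Hparts; try prove_ex_RInt.
  lra.
Qed.

Lemma RInt_second_derivative x : RInt (fun t => h'' (x + t)) 0 (2 * PI) = 0.
Proof.
  rewrite (RInt_ext_R _ (fun t => h'' (x + t) * cos (INR 0 * t)))
    by (intros t _; rewrite Rmult_0_l, cos_0; ring).
  rewrite RInt_second_derivative_cos; simpl; ring.
Qed.

(* P(t) = PI t - t^2/2 has P'' = -1 and vanishes at both ends while P' drops from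
   PI to -PI, so two integrations by parts give int h'' P = 2 PI h(x) - int h. *)
Lemma RInt_green x :
  RInt (fun t => h (x + t) + h'' (x + t) * (PI * t - t * t / 2)) 0 (2 * PI) = 2 * PI * h x.
Proof.
  rewrite (RInt_antiderivative
             (fun t => Derive h (x + t) * (PI * t - t * t / 2) - h (x + t) * (PI - t))).
  - rewrite Rplus_0_r, (periodic2pi_Derive h h_periodic), h_periodic; simpl; field.
  - intros t _; auto_derive; [repeat split; auto |].
    change (Derive (fun y => Derive h y)) with h''.
    change (Derive (fun y => h y)) with (Derive h); field.
  - intros t _; prove_continuous.
Qed.

Lemma fourier_a0_shift x :
  fourier_a0 h = / (2 * PI) * RInt (fun t => h (x + t)) 0 (2 * PI).
Proof.
  unfold fourier_a0; rewrite (RInt_periodic_shift h x); [reflexivity | | exact h_periodic].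
  intros y; prove_continuous.
Qed.

Lemma fourier_partial_sum_error x N :
  h x - sum_n (fourier_term h x) N =
  / (2 * PI) * RInt (fun t => h'' (x + t) *
                     (fourier_error_kernel N t - fourier_error_kernel N PI)) 0 (2 * PI).
Proof.
  pose proof PI_neq0; pose proof ex_derive_fourier_error_kernel as HQ.
  induction N as [| N IH].
  - rewrite (RInt_ext_R _ (fun t => h'' (x + t) * (PI * t - t * t / 2)
                                   - (PI * PI - PI * PI / 2) * h'' (x + t)))
      by (intros t _; rewrite !fourier_error_kernel_0; ring).
    rewrite RInt_Rminus, RInt_Rmult_l, RInt_second_derivative; try prove_ex_RInt.
    assert (Hparabola : RInt (fun t => h'' (x + t) * (PI * t - t * t / 2)) 0 (2 * PI) =
                        2 * PI * h x - RInt (fun t => h (x + t)) 0 (2 * PI)).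
    { pose proof (RInt_green x) as Hgreen.
      rewrite RInt_Rplus in Hgreen by prove_ex_RInt.
      simpl in *; lra. }
    rewrite sum_O; change (fourier_term h x 0) with (fourier_a0 h).
    rewrite (fourier_a0_shift x), Hparabola; field; assumption.
  - assert (Hn : INR (S N) <> 0) by (apply not_0_INR; lia).
    set (c := 2 / (INR (S N) * INR (S N))).
    rewrite (RInt_ext_R _ (fun t =>
               h'' (x + t) * (fourier_error_kernel N t - fourier_error_kernel N PI)
               + c * (h'' (x + t) * cos (INR (S N) * t))
               - c * cos (INR (S N) * PI) * h'' (x + t)))
      by (intros t _; rewrite !fourier_error_kernel_S; unfold c, Rdiv; ring).
    rewrite RInt_Rminus, RInt_Rplus, !RInt_Rmult_l, RInt_second_derivative_cos,
      RInt_second_derivative; try prove_ex_RInt.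
    rewrite sum_n_R_S; change (fourier_term h x (S N)) with (fourier_mode h (S N) x).
    rewrite (fourier_mode_shift x (S N)).
    set (E := RInt _ 0 (2 * PI)) in IH |- *.
    replace (sum_n (fourier_term h x) N) with (h x - / (2 * PI) * E) by lra.
    unfold c; field; split; assumption.
Qed.

Lemma fourier_partial_sum_error_bound x N :
  Rabs (h x - sum_n (fourier_term h x) N) <=
  / (2 * PI) * RInt (fun t => Rabs (h'' (x + t))) 0 (2 * PI) * (PI / (INR N + / 2)).
Proof.
  pose proof PI_RGT_0; pose proof ex_derive_fourier_error_kernel as HQ.
  rewrite fourier_partial_sum_error, Rabs_mult, Rabs_pos_eq, Rmult_assoc
    by (apply Rlt_le, Rinv_0_lt_compat; lra).
  apply Rmult_le_compat_l; [apply Rlt_le, Rinv_0_lt_compat; lra |].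
  eapply Rle_trans; [apply abs_RInt_le; [lra | prove_ex_RInt] |].
  rewrite (Rmult_comm _ (PI / _)), <- RInt_Rmult_l by prove_ex_RInt.
  apply RInt_le; [lra | prove_ex_RInt | prove_ex_RInt |].
  intros t Ht; rewrite Rabs_mult, Rmult_comm.
  apply Rmult_le_compat_r; [apply Rabs_pos | apply fourier_error_kernel_bound, Ht].
Qed.

Theorem is_series_fourier_term x : is_series (fourier_term h x) (h x).
Proof.
  set (C := / (2 * PI) * RInt (fun t => Rabs (h'' (x + t))) 0 (2 * PI) * PI).
  assert (Herror : is_lim_seq (fun N => h x - sum_n (fourier_term h x) N) 0).
  { apply is_lim_seq_abs_0.
    apply (is_lim_seq_le_le (fun _ => 0) _ (fun N => C * / (INR N + / 2))).
    - intros N; split; [apply Rabs_pos |].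
      unfold C; rewrite Rmult_assoc; exact (fourier_partial_sum_error_bound x N).
    - apply is_lim_seq_const.
    - replace (Finite 0) with (Rbar_mult C 0) by (simpl; f_equal; ring).
      apply is_lim_seq_scal_l, is_lim_seq_inv_INR_plus_half. }
  pose proof (is_lim_seq_minus' _ _ (h x) 0 (is_lim_seq_const (h x)) Herror) as Hlim.
  rewrite Rminus_0_r in Hlim.
  refine (is_lim_seq_ext _ _ _ _ Hlim); intros N.
  change (h x - (h x - sum_n (fourier_term h x) N) = sum_n (fourier_term h x) N); ring.
Qed.

End FourierSeries.

(** * Averaging over k rotations *)

Lemma sum_sin_arith_progression θ α m :
  2 * sin (α / 2) * sum_n_m (fun j => sin (θ + INR j * α)) 0 m =
  cos (θ - α / 2) - cos (θ + (INR m + / 2) * α).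
Proof.
  induction m as [| m IH].
  - rewrite sum_n_n; simpl.
    replace (θ + 0 * α) with θ by ring.
    replace (θ + (0 + / 2) * α) with (θ + α / 2) by field.
    rewrite cos_plus, cos_minus; ring.
  - rewrite sum_n_m_R_S, Rmult_plus_distr_l, IH by lia.
    set (β := θ + INR (S m) * α).
    replace (θ + (INR m + / 2) * α) with (β - α / 2) by (unfold β; rewrite S_INR; field).
    replace (θ + (INR (S m) + / 2) * α) with (β + α / 2) by (unfold β; field).
    rewrite (cos_plus β), (cos_minus β); ring.
Qed.

Lemma sum_sin_full_turns θ α m p :
  sin (α / 2) <> 0 -> INR (S m) * α = 2 * INR p * PI ->
  sum_n_m (fun j => sin (θ + INR j * α)) 0 m = 0.
Proof.
  intros Hsin Hturns.
  pose proof (sum_sin_arith_progression θ α m) as Hsum.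
  replace (θ + (INR m + / 2) * α) with (θ - α / 2 + 2 * INR p * PI) in Hsum
    by (rewrite <- Hturns, S_INR; field).
  rewrite cos_period, Rminus_diag in Hsum.
  apply Rmult_integral in Hsum as [H0 | H0]; [| exact H0].
  exfalso; apply Hsin; lra.
Qed.

Lemma sum_cos_full_turns θ α m p :
  sin (α / 2) <> 0 -> INR (S m) * α = 2 * INR p * PI ->
  sum_n_m (fun j => cos (θ + INR j * α)) 0 m = 0.
Proof.
  intros Hsin Hturns.
  rewrite (sum_n_m_ext _ (fun j => sin (PI / 2 + θ + INR j * α)))
    by (intros j; rewrite cos_sin, Rplus_assoc; reflexivity).
  exact (sum_sin_full_turns _ α m p Hsin Hturns).
Qed.

Lemma sin_PI_ratio_neq_0 n k : (0 < k)%nat -> (n mod k <> 0)%nat ->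
  sin (PI * INR n / INR k) <> 0.
Proof.
  intros Hk Hmod Hsin; apply sin_eq_0_0 in Hsin as [z Hz].
  assert (HkR : INR k <> 0) by (apply not_0_INR; lia).
  assert (Hnz : INR n = IZR z * INR k).
  { pose proof PI_neq0.
    replace (INR n) with (PI * INR n / INR k * INR k / PI) by (field; split; assumption).
    rewrite Hz; field; assumption. }
  rewrite !INR_IZR_INZ, <- mult_IZR in Hnz; apply eq_IZR in Hnz.
  apply Hmod, Nat.Div0.mod_divides; exists (Z.to_nat z); lia.
Qed.

Lemma average_fourier_mode_rotations h n k s : (0 < k)%nat ->
  / INR k * sum_n_m (fun j => fourier_mode h n (s + 2 * PI * INR j / INR k)) 0 (k - 1) =
  if Nat.eqb (n mod k) 0 then fourier_mode h n s else 0.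
Proof.
  intros Hk; destruct k as [| m]; [lia |]; replace (S m - 1)%nat with m by lia.
  assert (HkR : INR (S m) <> 0) by (apply not_0_INR; lia).
  destruct (Nat.eqb_spec (n mod S m) 0) as [Hdiv | Hndiv].
  - apply Nat.Div0.mod_divides in Hdiv as [c Hc].
    rewrite (sum_n_m_ext _ (fun _ => fourier_mode h n s)).
    + rewrite sum_n_m_const, Nat.sub_0_r; field; exact HkR.
    + intros j; unfold fourier_mode.
      replace (INR n * (s + 2 * PI * INR j / INR (S m)))
        with (INR n * s + 2 * INR (j * c) * PI)
        by (rewrite Hc, !mult_INR; field; exact HkR).
      rewrite cos_period, sin_period; reflexivity.
  - set (α := 2 * PI * INR n / INR (S m)).
    assert (Hsin : sin (α / 2) <> 0).
    { replace (α / 2) with (PI * INR n / INR (S m)) by (unfold α; field; exact HkR).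
      apply sin_PI_ratio_neq_0; [lia | exact Hndiv]. }
    assert (Hturns : INR (S m) * α = 2 * INR n * PI) by (unfold α; field; exact HkR).
    unfold fourier_mode.
    rewrite (sum_n_m_ext _ (fun j => fourier_a h n * cos (INR n * s + INR j * α)
                                    + fourier_b h n * sin (INR n * s + INR j * α)))
      by (intros j; unfold α; do 2 f_equal; [f_equal | f_equal]; field; exact HkR).
    rewrite sum_n_m_Rplus, !sum_n_m_Rmult_l, (sum_cos_full_turns _ α m n),
      (sum_sin_full_turns _ α m n) by assumption.
    ring.
Qed.

Lemma average_fourier_term_rotations h n k s : (0 < k)%nat ->
  / INR k * sum_n_m (fun j => fourier_term h (s + 2 * PI * INR j / INR k) n) 0 (k - 1) =
  if Nat.eqb (n mod k) 0 then fourier_term h s n else 0.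
Proof.
  intros Hk; destruct n as [| n].
  - rewrite Nat.Div0.mod_0_l; unfold fourier_term; simpl.
    rewrite sum_n_m_const; replace (S (k - 1) - 0)%nat with k by lia.
    field; apply not_0_INR; lia.
  - exact (average_fourier_mode_rotations h (S n) k s Hk).
Qed.

Lemma is_series_sum_n_m (a : nat -> nat -> R) (l : nat -> R) m :
  (forall j, is_series (a j) (l j)) ->
  is_series (fun n => sum_n_m (fun j => a j n) 0 m) (sum_n_m l 0 m).
Proof.
  intros Ha; induction m as [| m IH].
  - rewrite sum_n_n; apply (is_series_ext (a 0%nat)); [intros n; rewrite sum_n_n |]; auto.
  - rewrite sum_n_Sm by lia.
    apply (is_series_ext (fun n => plus (sum_n_m (fun j => a j n) 0 m) (a (S m) n)));
      [intros n; rewrite sum_n_Sm by lia; reflexivity |].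
    apply (@is_series_plus R_AbsRing R_NormedModule); auto.
Qed.

Lemma half_avg_width h : / 2 * avg_width h = fourier_a0 h.
Proof. unfold avg_width, fourier_a0; field; apply PI_neq0. Qed.

Lemma smooth_hk h k : smooth h -> smooth (hk h k).
Proof.
  intros Hh n x; unfold hk.
  apply ex_derive_n_minus; apply filter_forall; intros y j _.
  - apply ex_derive_n_scal_l, ex_derive_n_sum_n_m.
    apply filter_forall; intros t l i _ _.
    apply ex_derive_n_comp_trans, Hh.
  - destruct j; [exact I | apply ex_derive_n_const].
Qed.

Lemma periodic2pi_hk h k : periodic2pi h -> periodic2pi (hk h k).
Proof.
  intros Hper s; unfold hk.
  do 2 f_equal; apply sum_n_m_ext; intros j.
  rewrite <- (Hper (s + _)); f_equal; ring.
Qed.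

Lemma Derive_hk h k s : (forall x, ex_derive h x) ->
  Derive (hk h k) s =
  / INR k * sum_n_m (fun j => Derive h (s + 2 * PI * INR j / INR k)) 0 (k - 1).
Proof.
  intros Hh.
  set (shifts := fun j y => h (y + 2 * PI * INR j / INR k)).
  assert (Hshifts : locally s (fun t => forall l j, (0 <= l <= k - 1)%nat ->
                      (j <= 1)%nat -> ex_derive_n (shifts l) j t)).
  { apply filter_forall; intros t l [| [| j]] _ Hj;
      [exact I | apply (ex_derive_n_comp_trans h 1), Hh | lia]. }
  unfold hk; rewrite Derive_minus, Derive_const, Derive_scal.
  - change (Derive _ s) with
      (Derive_n (fun y => sum_n_m (fun j => shifts j y) 0 (k - 1)) 1 s).
    rewrite Derive_n_sum_n_m by exact Hshifts.
    rewrite Rminus_0_r; f_equal; apply sum_n_m_ext; intros j.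
    apply (Derive_n_comp_trans h 1).
  - apply ex_derive_scal.
    exact (ex_derive_n_sum_n_m 0 (k - 1) shifts 1 s Hshifts).
  - apply ex_derive_const.
Qed.

Lemma is_series_fourier_term_div (h : R -> R) (k : nat) (s : R) :
  (forall x, ex_derive h x) -> (forall x, ex_derive (Derive h) x) ->
  (forall x, continuous (Derive (Derive h)) x) -> periodic2pi h -> (1 < k)%nat ->
  is_series (fourier_term_div h k s) (hk h k s).
Proof.
  intros Hd Hd' Hd'' Hper Hk.
  set (average := fun n =>
    / INR k * sum_n_m (fun j => fourier_term h (s + 2 * PI * INR j / INR k) n) 0 (k - 1)).
  assert (Haverage : is_series average
            (/ INR k * sum_n_m (fun j => h (s + 2 * PI * INR j / INR k)) 0 (k - 1))).
  { apply (@is_series_scal R_AbsRing R_NormedModule), is_series_sum_n_m.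
    intros j; apply is_series_fourier_term; assumption. }
  apply is_series_decr_1, (is_series_ext (fun n => average (S n))).
  - intros n; unfold average; rewrite average_fourier_term_rotations by lia.
    unfold fourier_term_div, fourier_term; simpl Nat.eqb at 2; cbv iota.
    destruct (Nat.eqb_spec (S n mod k) 0) as [Hdiv | Hndiv].
    + destruct n as [| n]; [rewrite Nat.mod_small in Hdiv by lia; discriminate |].
      reflexivity.
    + rewrite Bool.andb_false_r; reflexivity.
  - apply is_series_incr_1.
    match goal with |- is_series _ ?l => replace l with
      (/ INR k * sum_n_m (fun j => h (s + 2 * PI * INR j / INR k)) 0 (k - 1)) end;
      [exact Haverage |].
    unfold average; rewrite average_fourier_term_rotations, Nat.Div0.mod_0_l by lia.
    unfold hk, fourier_term_div, plus, opp; simpl.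
    rewrite half_avg_width; change (fourier_term h s 0%nat) with (fourier_a0 h); ring.
Qed.

(** * The Order Preserving Set *)

Lemma rotate_back_hedgehog_point a b s t :
  vadd (vscal (cos t) (vadd (vscal a (u (s + t))) (vscal b (u' (s + t)))))
       (vscal (- sin t) (perp (vadd (vscal a (u (s + t))) (vscal b (u' (s + t)))))) =
  vadd (vscal a (u s)) (vscal b (u' s)).
Proof.
  assert (Hcos : cos s = cos (s + t - t)) by (f_equal; ring).
  assert (Hsin : sin s = sin (s + t - t)) by (f_equal; ring).
  unfold vadd, vscal, perp, u, u'; simpl.
  rewrite Hcos, Hsin, cos_minus, sin_minus; f_equal; ring.
Qed.

Lemma vsum_ext f g n : (forall j, f j = g j) -> vsum f n = vsum g n.
Proof. intros Hfg; induction n as [| n IH]; simpl; [| rewrite IH, Hfg]; reflexivity. Qed.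

Lemma vsum_linear (a b : nat -> R) p q n :
  vsum (fun j => vadd (vscal (a j) p) (vscal (b j) q)) n =
  vadd (vscal (sum_n_m a 1 n) p) (vscal (sum_n_m b 1 n) q).
Proof.
  induction n as [| n IH]; simpl.
  - rewrite !sum_n_m_zero by lia.
    unfold vadd, vscal, zero; simpl; f_equal; ring.
  - rewrite IH, !sum_n_m_R_S by lia.
    unfold vadd, vscal; simpl; f_equal; ring.
Qed.

Lemma OPS_hedgehog_hk h k s :
  (forall x, ex_derive h x) -> periodic2pi h -> (0 < k)%nat ->
  OPS h k s = hedgehog (hk h k) s.
Proof.
  intros Hh Hper Hk.
  destruct k as [| m]; [lia |].
  set (shifted := fun (f : R -> R) j => f (s + 2 * PI * INR j / INR (S m))).
  assert (Hwrap : forall f, periodic2pi f ->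
                  sum_n_m (shifted f) 1 (S m) = sum_n_m (shifted f) 0 m).
  { intros f Hf; apply sum_n_m_shift_periodic; unfold shifted.
    replace (s + 2 * PI * INR (S m) / INR (S m))
      with (s + 2 * PI * INR 0 / INR (S m) + 2 * PI)
      by (change (INR 0) with 0; field; apply not_0_INR; lia).
    apply Hf. }
  unfold OPS, hedgehog_perp, hedgehog at 1 2.
  rewrite (vsum_ext _ (fun j => vadd (vscal (shifted h j) (u s))
                                     (vscal (shifted (Derive h) j) (u' s))))
    by (intros j; apply rotate_back_hedgehog_point).
  rewrite vsum_linear, (Hwrap h Hper), (Hwrap (Derive h) (periodic2pi_Derive h Hper)).
  unfold hedgehog; rewrite Derive_hk by exact Hh.
  unfold hk, shifted; replace (S m - 1)%nat with m by lia.
  unfold vadd, vscal; simpl; f_equal; ring.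
Qed.

Theorem proposition3p7 (h : R -> R) (k : nat) :
  smooth h -> periodic2pi h -> (2 < k)%nat ->
  smooth (hk h k) /\ periodic2pi (hk h k) /\
  (forall s : R, OPS h k s = hedgehog (hk h k) s) /\
  (forall s : R, is_series (fourier_term_div h k s) (hk h k s)).
Proof.
  intros Hh Hper Hk.
  assert (Hd : forall x, ex_derive h x) by exact (Hh 1%nat).
  assert (Hd' : forall x, ex_derive (Derive h) x) by exact (Hh 2%nat).
  assert (Hd'' : forall x, continuous (Derive (Derive h)) x)
    by (intros x; apply (@ex_derive_continuous R_AbsRing R_NormedModule), (Hh 3%nat)).
  split; [apply smooth_hk, Hh |].
  split; [apply periodic2pi_hk, Hper |].
  split; [intros s; apply OPS_hedgehog_hk; auto; lia |].
  intros s; apply is_series_fourier_term_div; auto; lia.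
Qed.
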